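(* Let $n\ge2$ be an integer. (i) For every integer $T$ with $1\le T\le\lfloor n/2\rfloor$, there exists a nonempty open subinterval $I=I(T)$ of $(1/n,n)$ such that for all $\lambda\in I$ $$\widehat\lambda_{n,T}(\lambda)>\frac1n \quad\text{and}\quad \lambda_{n,T+2}(\lambda)<\frac1n .$$ (ii) For every integer $T$ with $\lfloor n/2\rfloor<T\le n+1$, we have $\widehat\lambda_{n,T}(\lambda)=\lambda_{n,T+1}(\lambda)<1/n$ for all $\lambda\in(1/n,\infty]$.
   Context: For an integer $n\ge1$ let $f_n(x)=(1+x)^{n+1}/x$ for $x>0$. The function $f_n$ is strictly decreasing on $(0,1/n]$ and strictly increasing on $[1/n,\infty)$. Regular graph exponents (Schmidt–Summerer), defined algebraically. For $\lambda\in[1/n,\infty)$ let $\mu\in(0,1/n]$ be the unique solution of $f_n(\mu)=f_n(\lambda)$, and set $$\lambda_{n,j}(\lambda)=\lambda^{1-\frac{j-1}{n+1}}\mu^{\frac{j-1}{n+1}},\qquad 1\le j\le n+2 .$$ All ratios $\lambda_{n,j}/\lambda_{n,j+1}$ are equal. For $\lambda=\infty$ put $\lambda_{n,1}=\infty$, $\lambda_{n,2}=1$ and $\lambda_{n,j}=0$ for $j\ge3$. Put $\widehat\lambda_{n,j}(\lambda):=\lambda_{n,j+1}(\lambda)$ for $1\le j\le n+1$. These are the exponents $\lambda_{n,j},\widehat\lambda_{n,j}$ of the regular graph in dimension $n$ with parameter $\lambda_n=\lambda$. (In terms of Diophantine approximation: by $\overline\psi_{n,T}<0\iff\widehat\lambda_{n,T}>1/n$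 and $\underline\psi_{n,T+2}>0\iff\lambda_{n,T+2}<1/n$, part (i) gives vectors inducing the regular graph whose $T$-th successive minimum function tends to $-\infty$ and whose $(T+2)$-nd tends to $+\infty$; this is Schmidt's property.) *)

From Stdlib Require Import Reals Lra Lia ClassicalEpsilon.
Open Scope R_scope.

Definition fn (n : nat) (x : R) : R := (1 + x) ^ (S n) / x.

(* mu(lambda): the (unique) solution mu in (0,1/n] of f_n(mu) = f_n(lambda),
   chosen by Hilbert's epsilon (the context asserts existence/uniqueness
   for lambda >= 1/n). *)
Definition mu_of (n : nat) (lam : R) : R :=
  epsilon (inhabits 0)
    (fun m => 0 < m /\ m <= 1 / INR n /\ fn n m = fn n lam).

(* Parameter lambda in [1/n, infinity]: Some l is the finite value l,
   None is lambda = infinity. *)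
Definition lam_nj (n j : nat) (x : option R) : R :=
  match x with
  | Some l =>
      let e := (INR j - 1) / INR (S n) in
      Rpower l (1 - e) * Rpower (mu_of n l) e
  | None =>
      match j with
      | 0%nat => 0 (* unused index *)
      | 1%nat => 0 (* lambda_{n,1}(infinity) = infinity; never used below *)
      | 2%nat => 1
      | _ => 0
      end
  end.

Definition lamhat_nj (n j : nat) (x : option R) : R := lam_nj n (S j) x.

(* For lambda > 1/n put r = (1 + mu)/(1 + lambda) in (0,1).  The equation
   f_n(mu) = f_n(lambda) becomes mu = lambda r^(n+1) and lambda (r + ... + r^n) = 1,
   and then lambda_{n,k+1} = lambda r^k.  Hence lambda_{n,k+1} < 1/n exactly when
   n r^k < r + r^2 + ... + r^n.
   (ii) By AM-GM, r + ... + r^n > n r^((n+1)/2) >= n r^T when 2T >= n + 1.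
   (i) As r -> 1 the mean of 1, r, ..., r^(n-1) is about 1 - (n-1)(1-r)/2, which
   lies below r^(T-1) when 2T <= n, whereas at r = 1/n it lies above.  The
   intermediate value theorem gives r0 with n r0^(T+1) < r0 + ... + r0^n < n r0^T;
   this condition is open, and r |-> lambda is continuous and decreasing. *)
From Stdlib Require Import Reals Lra Lia Psatz ClassicalEpsilon.
Open Scope R_scope.

Fixpoint geom (r : R) (k : nat) : R :=
  match k with O => 0 | S k => geom r k + r ^ k end.

Lemma geom_S r k : geom r (S k) = 1 + r * geom r k.
Proof.
  induction k as [|k IH]; [simpl; ring|].
  change (geom r (S (S k))) with (geom r (S k) + r ^ S k).
  rewrite IH at 1; simpl; ring.
Qed.

Lemma geom_SS r k : geom r (S (S k)) = 1 + r * geom r k + r ^ S k.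
Proof. rewrite geom_S; simpl; ring. Qed.

Lemma geom_telescope r k : (1 - r) * geom r k = 1 - r ^ k.
Proof. induction k as [|k IH]; simpl; [ring|]. rewrite Rmult_plus_distr_l, IH; ring. Qed.

Lemma geom_nonneg r k : 0 <= r -> 0 <= geom r k.
Proof. intros Hr; induction k; simpl; [lra|]. pose proof (pow_le r k Hr); lra. Qed.

Lemma geom_ge_1 r k : 0 <= r -> (1 <= k)%nat -> 1 <= geom r k.
Proof.
  intros Hr Hk; destruct k as [|k]; [lia|].
  rewrite geom_S; pose proof (geom_nonneg r k Hr); nra.
Qed.

Lemma geom_le_compat r s k : 0 <= r <= s -> geom r k <= geom s k.
Proof. intros H; induction k; simpl; [lra|]. pose proof (pow_incr r s k H); lra. Qed.

Lemma pow_le_1 r k : 0 <= r <= 1 -> r ^ k <= 1.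
Proof. intros H; induction k; simpl; [lra|]. pose proof (pow_le r k (proj1 H)); nra. Qed.

Lemma pow_le_antimono r a b : 0 <= r <= 1 -> (a <= b)%nat -> r ^ b <= r ^ a.
Proof.
  intros H Hab; replace b with (a + (b - a))%nat by lia; rewrite pow_add.
  pose proof (pow_le_1 r (b - a) H); pose proof (pow_le r a (proj1 H)); nra.
Qed.

Lemma geom_le_n r k : 0 <= r <= 1 -> geom r k <= INR k.
Proof.
  intros H; induction k; [simpl; lra|].
  rewrite S_INR; simpl; pose proof (pow_le_1 r k H); lra.
Qed.

Lemma geom_one k : geom 1 k = INR k.
Proof. induction k as [|k IH]; [reflexivity|]. rewrite S_INR; simpl; rewrite IH, pow1; ring. Qed.

Lemma geom_ge_n_pow r k : 0 <= r <= 1 -> INR k * r ^ k <= geom r k.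
Proof.
  intros H; induction k as [|k IH]; [simpl; lra|].
  rewrite S_INR; simpl.
  pose proof (pow_le r k (proj1 H)); pose proof (pos_INR k).
  assert (0 <= INR k * r ^ k) by (apply Rmult_le_pos; lra).
  nra.
Qed.

Lemma geom_mul_lt n a b : (1 <= n)%nat -> 0 <= a < b -> a * geom a n < b * geom b n.
Proof.
  intros Hn Hab.
  pose proof (geom_le_compat a b n ltac:(lra)); pose proof (geom_ge_1 a n ltac:(lra) Hn).
  nra.
Qed.

Lemma geom_continuous k : continuity (fun r => geom r k).
Proof.
  induction k as [|k IH]; simpl.
  - apply continuity_const; intros x y; reflexivity.
  - apply (continuity_plus (fun r => geom r k) (fun r => r ^ k)); [exact IH|].
    apply derivable_continuous, derivable_pow.
Qed.

Lemma nat_pair_ind (P : nat -> Prop) :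
  P 0%nat -> P 1%nat -> (forall m, P m -> P (S (S m))) -> forall m, P m.
Proof.
  intros H0 H1 HS; apply Nat.pair_induction; auto.
  intros x y ->; reflexivity.
Qed.

Lemma geom_sq_odd_step q m :
  q * geom (q ^ 2) (S (S m)) = q + q ^ 2 * (q * geom (q ^ 2) m) + q * (q ^ S m) ^ 2.
Proof.
  rewrite geom_SS, <- !pow_mult; replace (S m * 2)%nat with (2 * S m)%nat by lia; ring.
Qed.

(* AM-GM for q, q^3, ..., q^(2m-1), whose sum is [q * geom (q ^ 2) m]. *)
Lemma geom_sq_odd_ge q m : 0 <= q -> INR m * q ^ m <= q * geom (q ^ 2) m.
Proof.
  intros Hq; induction m as [| |m IH] using nat_pair_ind; [simpl; lra|simpl; lra|].
  rewrite geom_sq_odd_step, !S_INR.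
  assert (q ^ 2 * (INR m * q ^ m) <= q ^ 2 * (q * geom (q ^ 2) m))
    by (apply Rmult_le_compat_l; [apply pow2_ge_0|exact IH]).
  assert (0 <= q * (1 - q ^ S m) ^ 2) by (apply Rmult_le_pos; [exact Hq|apply pow2_ge_0]).
  replace (q ^ S (S m)) with (q * q ^ S m) by reflexivity.
  replace (q ^ 2 * (INR m * q ^ m)) with (INR m * (q * q ^ S m)) in * by (simpl; ring).
  nra.
Qed.

Lemma geom_sq_odd_gt q m :
  0 < q < 1 -> INR (S (S m)) * q ^ S (S m) < q * geom (q ^ 2) (S (S m)).
Proof.
  intros Hq; rewrite geom_sq_odd_step, !S_INR.
  pose proof (geom_sq_odd_ge q m ltac:(lra)) as IH.
  assert (q ^ 2 * (INR m * q ^ m) <= q ^ 2 * (q * geom (q ^ 2) m))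
    by (apply Rmult_le_compat_l; [apply pow2_ge_0|exact IH]).
  assert (q ^ S m < 1) by (apply pow_lt_1_compat; [lra|lia]).
  assert (0 < q * (1 - q ^ S m) ^ 2)
    by (apply Rmult_lt_0_compat; [lra|apply pow_lt; lra]).
  replace (q ^ S (S m)) with (q * q ^ S m) by reflexivity.
  replace (q ^ 2 * (INR m * q ^ m)) with (INR m * (q * q ^ S m)) in * by (simpl; ring).
  nra.
Qed.

Lemma geom_mul_gt_n_pow n T r :
  (2 <= n)%nat -> (n + 1 <= 2 * T)%nat -> 0 < r < 1 -> INR n * r ^ T < r * geom r n.
Proof.
  intros Hn HT Hr.
  set (q := sqrt r).
  assert (Hq0 : 0 < q) by (apply sqrt_lt_R0; lra).
  assert (Hqr : q ^ 2 = r) by (unfold q; simpl; rewrite Rmult_1_r; apply sqrt_sqrt; lra).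
  assert (Hq1 : q < 1) by nra.
  destruct n as [|[|k]]; [lia|lia|].
  pose proof (geom_sq_odd_gt q k (conj Hq0 Hq1)) as Hgt; rewrite Hqr in Hgt.
  assert (r ^ T <= q * q ^ S (S k)).
  { rewrite <- Hqr, <- pow_mult; change (q * q ^ S (S k)) with (q ^ S (S (S k))).
    apply pow_le_antimono; [lra|lia]. }
  pose proof (pos_INR (S (S k))).
  assert (INR (S (S k)) * r ^ T <= q * (INR (S (S k)) * q ^ S (S k))).
  { replace (q * (INR (S (S k)) * q ^ S (S k))) with (INR (S (S k)) * (q * q ^ S (S k))) by ring.
    apply Rmult_le_compat_l; lra. }
  assert (q * (INR (S (S k)) * q ^ S (S k)) < q * (q * geom r (S (S k))))
    by (apply Rmult_lt_compat_l; lra).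
  replace (r * geom r (S (S k))) with (q * (q * geom r (S (S k)))) by (rewrite <- Hqr; ring).
  lra.
Qed.

Lemma geom_chord r m : 0 <= r <= 1 -> 2 * geom r (S m) <= INR (S m) * (1 + r ^ m).
Proof.
  intros Hr; induction m as [| |m IH] using nat_pair_ind; [simpl; lra|simpl; lra|].
  rewrite geom_SS; rewrite !S_INR in *.
  pose proof (pow_le r m (proj1 Hr)); pose proof (pow_le_1 r (S m) Hr).
  assert (r * (2 * geom r (S m)) <= r * ((INR m + 1) * (1 + r ^ m)))
    by (apply Rmult_le_compat_l; lra).
  assert (0 <= (INR m + 1) * ((1 - r) * (1 - r ^ S m))).
  { pose proof (pos_INR m); apply Rmult_le_pos; [lra|apply Rmult_le_pos; lra]. }
  replace (r ^ S (S m)) with (r * r ^ S m) by reflexivity.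
  replace (r ^ S m) with (r * r ^ m) in * by reflexivity.
  nra.
Qed.

Lemma geom_lt_n_pow_near_1 c n : (1 <= c)%nat -> (2 * c + 2 <= n)%nat ->
  exists r, 1 / 2 <= r < 1 /\ geom r n < INR n * r ^ c.
Proof.
  intros Hc Hn.
  (* With e = 1/(4c^2) and r = 1 - e: (1 - r^c)^2 <= (c e)^2 = e/4 < r^(2c) e, i.e.
     1 + r^(2c+1) < 2 r^c; the chord bound 2 G(r,n) <= n (1 + r^(n-1)) concludes. *)
  set (C := INR c); assert (HC : 1 <= C) by (apply (le_INR 1); lia).
  set (e := / (4 * C ^ 2)).
  assert (He : 0 < e) by (apply Rinv_0_lt_compat; nra).
  assert (HCe : C ^ 2 * e = 1 / 4) by (unfold e; field; lra).
  assert (HCe' : C * e <= 1 / 4) by nra.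
  set (r := 1 - e); exists r.
  assert (Hr : 1 / 2 <= r < 1) by (unfold r; nra).
  split; [exact Hr|].
  set (u := r ^ c).
  assert (Hu : 1 - C * e <= u <= 1).
  { split; [|apply pow_le_1; lra].
    pose proof (geom_telescope r c) as Ht; pose proof (geom_le_n r c ltac:(lra)) as Hle.
    replace (1 - r) with e in Ht by (unfold r; ring); fold u in Ht; fold C in Hle.
    nra. }
  assert (Hkey : 1 + u ^ 2 * r < 2 * u).
  { assert ((1 - u) ^ 2 <= (C * e) ^ 2) by (apply pow_incr; lra).
    assert ((1 - C * e) ^ 2 <= u ^ 2) by (apply pow_incr; lra).
    unfold r; nra. }
  destruct n as [|m]; [lia|].
  pose proof (geom_chord r m ltac:(lra)) as Hch.
  assert (r ^ m <= u ^ 2 * r).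
  { unfold u; rewrite <- pow_mult; replace (r ^ (c * 2) * r) with (r ^ S (c * 2)) by (simpl; ring).
    apply pow_le_antimono; [lra|lia]. }
  assert (0 < INR (S m)) by (apply lt_0_INR; lia).
  nra.
Qed.

Lemma geom_param_iff n l z : z <> 1 ->
  l * (z * geom z n) = 1 <-> 1 + l * z ^ S n = z * (1 + l).
Proof.
  intros Hz.
  assert (E : (1 - z) * (l * (z * geom z n)) = l * z - l * z ^ S n)
    by (replace ((1 - z) * (l * (z * geom z n))) with (l * z * ((1 - z) * geom z n)) by ring;
        rewrite geom_telescope; simpl; ring).
  split; intros H.
  - rewrite H in E; lra.
  - apply (Rmult_eq_reg_l (1 - z)); [|lra]. rewrite E; lra.
Qed.

Lemma fn_eq_pow n l m : 0 < l -> 0 < m -> fn n m = fn n l ->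
  m = l * ((1 + m) / (1 + l)) ^ S n.
Proof.
  unfold fn; intros Hl Hm H.
  assert (0 < (1 + l) ^ S n) by (apply pow_lt; lra).
  unfold Rdiv; rewrite Rpow_mult_distr, pow_inv.
  apply (Rmult_eq_reg_r (/ m)); [|apply Rinv_neq_0_compat; lra].
  replace (l * ((1 + m) ^ S n * / (1 + l) ^ S n) * / m) with (l * / (1 + l) ^ S n * ((1 + m) ^ S n / m))
    by (field; lra).
  rewrite H; field; lra.
Qed.

Lemma geom_mul_continuous n : continuity (fun r => r * geom r n).
Proof.
  apply (continuity_mult (fun r => r) (fun r => geom r n));
    [apply derivable_continuous, derivable_id|apply geom_continuous].
Qed.

Lemma geom_mul_eq_inv n l : (1 <= n)%nat -> 1 / INR n < l ->
  exists z, 0 < z < 1 /\ l * (z * geom z n) = 1.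
Proof.
  intros Hn Hl.
  assert (HN : 1 <= INR n) by (apply (le_INR 1); lia).
  assert (Hl0 : 0 < l) by (assert (0 < 1 / INR n) by (apply Rdiv_lt_0_compat; lra); lra).
  assert (Hil : / l < INR n).
  { apply (Rmult_lt_reg_l l); [lra|]. rewrite Rinv_r by lra.
    apply (Rmult_lt_compat_r (INR n)) in Hl; [|lra].
    replace (1 / INR n * INR n) with 1 in Hl by (field; lra). lra. }
  assert (Hil0 : 0 < / l) by (apply Rinv_0_lt_compat; lra).
  destruct (IVT (fun r => r * geom r n - / l) 0 1) as [z [Hz Hfz]].
  - apply continuity_minus; [apply geom_mul_continuous|].
    apply continuity_const; intros x y; reflexivity.
  - lra.
  - simpl; lra.
  - rewrite geom_one; lra.
  - assert (z <> 0) by (intros ->; simpl in Hfz; lra).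
    assert (z <> 1) by (intros ->; rewrite geom_one in Hfz; lra).
    exists z; split; [lra|].
    replace (z * geom z n) with (/ l) by lra; field; lra.
Qed.

Lemma mu_of_spec n l : (1 <= n)%nat -> 1 / INR n < l ->
  0 < mu_of n l /\ mu_of n l <= 1 / INR n /\ fn n (mu_of n l) = fn n l.
Proof.
  intros Hn Hl; unfold mu_of; apply epsilon_spec.
  assert (HN : 1 <= INR n) by (apply (le_INR 1); lia).
  destruct (geom_mul_eq_inv n l Hn Hl) as [z [Hz Hlz]].
  assert (Hl0 : 0 < l) by (assert (0 < 1 / INR n) by (apply Rdiv_lt_0_compat; lra); lra).
  assert (Hzn : 0 < z ^ S n) by (apply pow_lt; lra).
  exists (l * z ^ S n); split; [|split].
  - apply Rmult_lt_0_compat; lra.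
  - pose proof (geom_ge_n_pow z n ltac:(lra)).
    apply (Rmult_le_reg_l (INR n)); [lra|].
    replace (INR n * (1 / INR n)) with 1 by (field; lra).
    rewrite <- Hlz; simpl.
    replace (INR n * (l * (z * z ^ n))) with ((l * z) * (INR n * z ^ n)) by ring.
    replace (l * (z * geom z n)) with ((l * z) * geom z n) by ring.
    apply Rmult_le_compat_l; nra.
  - apply geom_param_iff in Hlz; [|lra].
    unfold fn; rewrite Hlz, Rpow_mult_distr.
    field; split; [lra|apply pow_nonzero; lra].
Qed.

Lemma lam_nj_Some_pow n k l r : 0 < l -> 0 < r -> mu_of n l = l * r ^ S n ->
  lam_nj n (S k) (Some l) = l * r ^ k.
Proof.
  intros Hl Hr Hm; unfold lam_nj; cbv zeta; rewrite Hm.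
  set (e := (INR (S k) - 1) / INR (S n)).
  assert (0 < INR (S n)) by (apply lt_0_INR; lia).
  assert (0 < r ^ S n) by (apply pow_lt; lra).
  rewrite <- Rpower_mult_distr by lra.
  rewrite <- (Rpower_pow (S n) r), Rpower_mult by lra.
  replace (INR (S n) * e) with (INR k) by (unfold e; rewrite (S_INR k); field; lra).
  rewrite Rpower_pow by lra.
  rewrite <- Rmult_assoc, <- Rpower_plus.
  replace (1 - e + e) with 1 by ring; rewrite Rpower_1 by lra; reflexivity.
Qed.

Lemma lam_nj_geom_param n l : (1 <= n)%nat -> 1 / INR n < l ->
  exists r, 0 < r < 1 /\ l * (r * geom r n) = 1 /\
    forall k, lam_nj n (S k) (Some l) = l * r ^ k.
Proof.
  intros Hn Hl.
  assert (HN : 1 <= INR n) by (apply (le_INR 1); lia).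
  assert (Hl0 : 0 < l) by (assert (0 < 1 / INR n) by (apply Rdiv_lt_0_compat; lra); lra).
  destruct (mu_of_spec n l Hn Hl) as [Hm0 [Hm1 Hfn]].
  set (m := mu_of n l) in *.
  set (r := (1 + m) / (1 + l)).
  assert (Hr : 0 < r < 1).
  { unfold r; split; [apply Rdiv_lt_0_compat; lra|].
    apply (Rmult_lt_reg_r (1 + l)); [lra|]. field_simplify; lra. }
  assert (Hmr : m = l * r ^ S n) by (apply fn_eq_pow; assumption).
  exists r; split; [exact Hr|split].
  - apply geom_param_iff; [lra|].
    rewrite <- Hmr; unfold r; field; lra.
  - intros k; apply lam_nj_Some_pow; [lra|lra|exact Hmr].
Qed.

Lemma geom_ge_1_plus r k : 0 <= r -> (2 <= k)%nat -> 1 + r <= geom r k.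
Proof.
  intros Hr Hk; destruct k as [|k]; [lia|].
  rewrite geom_S; pose proof (geom_ge_1 r k Hr ltac:(lia)); nra.
Qed.

Lemma geom_lt_n r k : 0 <= r < 1 -> (2 <= k)%nat -> geom r k < INR k.
Proof.
  intros Hr Hk; destruct k as [|k]; [lia|].
  rewrite geom_S, S_INR.
  pose proof (geom_le_n r k ltac:(lra)); assert (1 <= INR k) by (apply (le_INR 1); lia).
  nra.
Qed.

Definition window n T r := INR n * r ^ S T < r * geom r n < INR n * r ^ T.

Lemma window_exists n T : (2 <= n)%nat -> (1 <= T)%nat -> (2 * T <= n)%nat ->
  exists r0, 1 / INR n <= r0 < 1 /\ window n T r0.
Proof.
  intros Hn HT1 HT2; unfold window.
  assert (HN : 2 <= INR n) by (apply (le_INR 2); lia).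
  set (s := 1 / INR n).
  assert (Hs : 0 < s <= 1 / 2).
  { unfold s; split; [apply Rdiv_lt_0_compat; lra|].
    apply Rmult_le_reg_r with (INR n); field_simplify; lra. }
  assert (Hsn : INR n * s = 1) by (unfold s; field; lra).
  pose proof (geom_ge_1_plus s n ltac:(lra) Hn) as Hgs.
  destruct T as [|[|c]]; [lia| |].
  - exists s; split; [lra|].
    pose proof (geom_lt_n s n ltac:(lra) Hn); simpl; nra.
  - destruct (geom_lt_n_pow_near_1 (S c) n ltac:(lia) ltac:(lia)) as [rb [Hrb Hhb]].
    assert (Hs4 : s <= 1 / 4).
    { assert (4 <= INR n) by (pose proof (le_INR 4 n ltac:(lia)) as H4; simpl in H4; lra).
      unfold s; apply Rmult_le_reg_r with (INR n); field_simplify; lra. }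
    set (h := fun r => geom r n - INR n * r ^ S c).
    set (eta := Rmin ((1 - rb) / 2) (- h rb / 2)).
    assert (Heta : 0 < eta < 1 - rb /\ eta < - h rb)
      by (unfold eta, h, Rmin; destruct (Rle_dec _ _); lra).
    assert (Hhs : 0 < h s).
    { unfold h; assert (s ^ S c <= s ^ 1) by (apply pow_le_antimono; [lra|lia]).
      simpl in *; nra. }
    destruct (IVT (fun r => - (h r + eta)) s rb) as [r0 [Hr0 Hh0]]; [|lra|lra|lra|].
    { apply continuity_opp, continuity_plus; [|apply continuity_const; intros x y; reflexivity].
      apply continuity_minus; [apply geom_continuous|].
      apply continuity_scal, derivable_continuous, derivable_pow. }
    unfold h in Hh0.
    (* [eta < 1 - rb] keeps the lower inequality strict at [r0]. *)
    exists r0; split; [lra|].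
    pose proof (geom_ge_1 r0 n ltac:(lra) ltac:(lia)).
    assert (E : INR n * r0 ^ S c = geom r0 n + eta) by lra.
    replace (INR n * r0 ^ S (S c)) with (r0 * (geom r0 n + eta)) by (rewrite <- E; simpl; ring).
    replace (INR n * r0 ^ S (S (S c))) with (r0 * (r0 * (geom r0 n + eta)))
      by (rewrite <- E; simpl; ring).
    assert (r0 * (geom r0 n + eta) < geom r0 n) by nra.
    split; apply Rmult_lt_compat_l; lra.
Qed.

Lemma continuity_pos_nbhd f x0 : continuity f -> 0 < f x0 ->
  exists d, 0 < d /\ forall x, Rabs (x - x0) < d -> 0 < f x.
Proof.
  intros Hc Hp; destruct (Hc x0 (f x0) Hp) as [d [Hd H]].
  exists d; split; [exact Hd|]; intros x Hx.
  destruct (Req_dec x x0) as [->|Hne]; [exact Hp|].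
  assert (Rabs (f x - f x0) < f x0) by (apply H; repeat split; auto).
  apply Rabs_def2 in H0; lra.
Qed.

Lemma window_open n T r0 : window n T r0 ->
  exists d, 0 < d /\ forall r, Rabs (r - r0) < d -> window n T r.
Proof.
  unfold window; intros [H1 H2].
  assert (Hc : forall k, continuity (fun r => r * geom r n - INR n * r ^ k)).
  { intros k; apply continuity_minus; [apply geom_mul_continuous|].
    apply continuity_scal, derivable_continuous, derivable_pow. }
  destruct (continuity_pos_nbhd _ r0 (Hc (S T)) ltac:(lra)) as [d1 [Hd1 Hr1]].
  destruct (continuity_pos_nbhd _ r0 (continuity_opp _ (Hc T)) ltac:(unfold opp_fct; lra))
    as [d2 [Hd2 Hr2]].
  exists (Rmin d1 d2); split; [now apply Rmin_pos|].
  intros r Hr; pose proof (Rmin_l d1 d2); pose proof (Rmin_r d1 d2).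
  specialize (Hr1 r ltac:(lra)); specialize (Hr2 r ltac:(lra)); unfold opp_fct in Hr2; lra.
Qed.

Lemma window_interval n T : (2 <= n)%nat -> (1 <= T)%nat -> (2 * T <= n)%nat ->
  exists r1 r2, 1 / INR n <= r1 /\ r1 < r2 /\ r2 <= 1 /\
    forall r, r1 < r < r2 -> window n T r.
Proof.
  intros Hn HT1 HT2.
  destruct (window_exists n T Hn HT1 HT2) as [r1 [Hr1 Hw1]].
  destruct (window_open n T r1 Hw1) as [d [Hd Hwin]].
  exists r1, (Rmin (r1 + d / 2) 1).
  pose proof (Rmin_l (r1 + d / 2) 1); pose proof (Rmin_r (r1 + d / 2) 1).
  split; [lra|split; [apply Rmin_glb_lt; lra|split; [lra|]]].
  intros r Hr; apply Hwin; rewrite Rabs_right; lra.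
Qed.

Lemma mul_sub_inv_eq N l y x : N <> 0 -> l * y = 1 ->
  l * x - 1 / N = l / N * (N * x - y).
Proof. intros HN Hly; rewrite <- Hly; field; exact HN. Qed.

Lemma lam_nj_lt_inv_n n T l : (2 <= n)%nat -> (n + 1 <= 2 * T)%nat -> 1 / INR n < l ->
  lam_nj n (S T) (Some l) < 1 / INR n.
Proof.
  intros Hn HT Hl.
  assert (HN : 2 <= INR n) by (apply (le_INR 2); lia).
  destruct (lam_nj_geom_param n l ltac:(lia) Hl) as [r [Hr [Hlr Hlam]]].
  assert (0 < 1 / INR n) by (apply Rdiv_lt_0_compat; lra).
  assert (0 < l / INR n) by (apply Rdiv_lt_0_compat; lra).
  pose proof (mul_sub_inv_eq (INR n) l _ (r ^ T) ltac:(lra) Hlr).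
  pose proof (geom_mul_gt_n_pow n T r Hn HT Hr).
  rewrite Hlam; nra.
Qed.

Lemma geom_mul_lt_reg n a b : (1 <= n)%nat -> 0 <= a -> 0 <= b ->
  a * geom a n < b * geom b n -> a < b.
Proof.
  intros Hn Ha Hb H; destruct (Rlt_or_le a b) as [|Hba]; [assumption|].
  destruct (Req_dec b a) as [->|]; [lra|].
  pose proof (geom_mul_lt n b a Hn ltac:(lra)); lra.
Qed.

Lemma lam_nj_window_interval n T : (2 <= n)%nat -> (1 <= T)%nat -> (2 * T <= n)%nat ->
  exists a b, 1 / INR n <= a /\ a < b /\ b <= INR n /\
    forall l, a < l < b ->
      1 / INR n < lam_nj n (S T) (Some l) /\ lam_nj n (S (S T)) (Some l) < 1 / INR n.
Proof.
  intros Hn HT1 HT2.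
  assert (HN : 2 <= INR n) by (apply (le_INR 2); lia).
  assert (Hinv : 0 < 1 / INR n) by (apply Rdiv_lt_0_compat; lra).
  destruct (window_interval n T Hn HT1 HT2) as [r0 [r2 [Hr0 [Hr02 [Hr2 Hwin]]]]].
  set (phi := fun r => r * geom r n).
  assert (Hphi0 : 1 / INR n <= phi r0).
  { unfold phi; pose proof (geom_ge_1 r0 n ltac:(lra) ltac:(lia)); nra. }
  assert (Hphi02 : phi r0 < phi r2) by (apply geom_mul_lt; lia || lra).
  assert (Hphi2 : phi r2 <= INR n).
  { unfold phi; pose proof (geom_le_n r2 n ltac:(lra)); pose proof (geom_nonneg r2 n ltac:(lra)); nra. }
  exists (/ phi r2), (/ phi r0); split; [|split; [|split]].
  - replace (1 / INR n) with (/ INR n) by (field; lra); apply Rinv_le_contravar; lra.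
  - apply Rinv_lt_contravar; nra.
  - replace (INR n) with (/ (1 / INR n)) by (field; lra); apply Rinv_le_contravar; lra.
  - intros l [Hla Hlb].
    assert (Hl : 1 / INR n < l).
    { assert (/ INR n <= / phi r2) by (apply Rinv_le_contravar; lra).
      replace (1 / INR n) with (/ INR n) by (field; lra); lra. }
    assert (Hl0 : 0 < l) by lra.
    destruct (lam_nj_geom_param n l ltac:(lia) Hl) as [r [Hr [Hlr Hlam]]].
    assert (Hphir : phi r = / l) by (unfold phi; apply (Rmult_eq_reg_l l); [rewrite Rinv_r|]; lra).
    assert (Hrr : r0 < r < r2).
    { split; apply (geom_mul_lt_reg n); try lia; try lra; fold (phi r0) (phi r) (phi r2); rewrite Hphir.
      - rewrite <- (Rinv_inv (phi r0)); apply Rinv_lt_contravar; [|lra].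
        apply Rmult_lt_0_compat; [|apply Rinv_0_lt_compat]; lra.
      - rewrite <- (Rinv_inv (phi r2)); apply Rinv_lt_contravar; [|lra].
        apply Rmult_lt_0_compat; [apply Rinv_0_lt_compat|]; lra. }
    destruct (Hwin r Hrr) as [Hw1 Hw2].
    assert (0 < l / INR n) by (apply Rdiv_lt_0_compat; lra).
    pose proof (mul_sub_inv_eq (INR n) l _ (r ^ T) ltac:(lra) Hlr).
    pose proof (mul_sub_inv_eq (INR n) l _ (r ^ S T) ltac:(lra) Hlr).
    rewrite !Hlam; split; nra.
Qed.

Theorem theorem2p7 (n : nat) (Hn : (2 <= n)%nat) :
  (forall T : nat, (1 <= T)%nat -> (T <= Nat.div n 2)%nat ->
     exists a b : R, 1 / INR n <= a /\ a < b /\ b <= INR n /\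
       forall l : R, a < l < b ->
         lamhat_nj n T (Some l) > 1 / INR n /\
         lam_nj n (T + 2) (Some l) < 1 / INR n)
  /\
  (forall T : nat, (Nat.div n 2 < T)%nat -> (T <= n + 1)%nat ->
     forall x : option R,
       match x with Some l => 1 / INR n < l | None => True end ->
       lamhat_nj n T x = lam_nj n (T + 1) x /\
       lam_nj n (T + 1) x < 1 / INR n).
Proof.
  pose proof (Nat.div_mod n 2 ltac:(lia)); pose proof (Nat.mod_upper_bound n 2 ltac:(lia)).
  unfold lamhat_nj; split.
  - intros T HT1 HT2; replace (T + 2)%nat with (S (S T)) by lia.
    apply lam_nj_window_interval; lia.
  - intros T HT1 HT2 [l|] Hx; rewrite Nat.add_1_r; split; [reflexivity| |reflexivity|].
    + apply lam_nj_lt_inv_n; lia || assumption.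
    + destruct T as [|[|T]]; [lia|lia|].
      apply Rdiv_lt_0_compat; [lra|apply (lt_INR 0); lia].
Qed.
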